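(* Let $0<p<q<\infty$, $m\in\mathbb{N}$, and let $E_1,\dots,E_m,F$ be Banach spaces over $\mathbb{K}=\mathbb{R}$ or $\mathbb{C}$. Then $$\eta^{m\text{-}mult}_{(p,q)}(E_1,\dots,E_m;F)\le\frac mp\ \text{ for } 0<q\le 2,\qquad \eta^{m\text{-}mult}_{(p,q)}(E_1,\dots,E_m;F)\le\frac{(qp-2p+2q)m}{2qp}\ \text{ for } q\ge2.$$
   Context: For vectors $x_1,\dots,x_n$ in a Banach space $E$ and $q>0$, $\|(x_k)_{k=1}^n\|_{w,q}:=\sup_{\varphi\in B_{E^*}}\left(\sum_{k=1}^n|\varphi(x_k)|^q\right)^{1/q}$, where $B_{E^*}$ is the closed unit ball of the dual. $\mathcal{L}(E_1,\dots,E_m;F)$ is the space of bounded $m$-linear maps. For $p,q>0$, the multilinear $m$-index of $(p,q)$-summability $\eta^{m\text{-}mult}_{(p,q)}(E_1,\dots,E_m;F)$ is the infimum of all real numbers $s$ with the property: for every $T\in\mathcal{L}(E_1,\dots,E_m;F)$ there is a constant $C\ge0$ (depending only on $m$ and $T$) such that $$\left(\sum_{k_1,\dots,k_m=1}^n\|T(x^{(1)}_{k_1},\dots,x^{(m)}_{k_m})\|^p\right)^{1/p}\le C n^{s}\prod_{i=1}^m\|(x^{(i)}_{k})_{k=1}^n\|_{w,q}$$ for all positive integers $n$ and all $x^{(i)}_k\in E_i$, $1\le k\le n$, $1\le i\le m$. *)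

From mathcomp Require Import all_boot all_algebra.
From mathcomp Require Import all_classical all_reals all_analysis.
From mathcomp Require Import complex.
Import numFieldNormedType.Exports.
Set Implicit Arguments. Unset Strict Implicit. Unset Printing Implicit Defensive.
Import GRing.Theory Num.Theory.
Local Open Scope classical_set_scope.
Local Open Scope ring_scope.

(* Scalars K are R (with re := id) or the complex numbers R[i] (with re := Re);
   re is only used to read the (real) value of a norm as an element of R. *)

Definition dual_ball (K : numFieldType) (E : normedModType K) : set (E -> K) :=
  [set phi | (forall (a : K) (x y : E), phi (a *: x + y) = a * phi x + phi y)
             /\ (forall x : E, `|phi x| <= `|x|)].

Definition weak_norm (R : realType) (K : numFieldType) (re : K -> R)
    (E : normedModType K) (q : R) (n : nat) (x : 'I_n -> E) : R :=
  sup [set (\sum_(k < n) (re `|phi (x k)|) `^ q) `^ q^-1 | phi in @dual_ball K E].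

Definition multilinear (K : numFieldType) (m : nat)
    (E : 'I_m -> normedModType K) (F : normedModType K)
    (T : (forall i, E i) -> F) : Prop :=
  forall (x : forall i, E i) (i : 'I_m) (a : K) (u v : E i),
    T (dfwith x i (a *: u + v)) = a *: T (dfwith x i u) + T (dfwith x i v).

Definition bounded_multilinear (K : numFieldType) (m : nat)
    (E : 'I_m -> normedModType K) (F : normedModType K)
    (T : (forall i, E i) -> F) : Prop :=
  multilinear T /\ exists C : K, forall x : forall i, E i,
    `|T x| <= C * \prod_(i < m) `|x i|.

Definition summing_exponent (R : realType) (K : numFieldType) (re : K -> R)
    (m : nat) (E : 'I_m -> normedModType K) (F : normedModType K)
    (p q s : R) : Prop :=
  forall T : (forall i, E i) -> F, bounded_multilinear T ->
  exists C : R, 0 <= C /\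
    forall (n : nat) (x : forall i : 'I_m, 'I_n -> E i), (0 < n)%N ->
      (\sum_(k : {ffun 'I_m -> 'I_n}) (re `|T (fun i => x i (k i))|) `^ p) `^ p^-1
        <= C * (n%:R `^ s) * \prod_(i < m) weak_norm re q (x i).

(* eta^{m-mult}_{(p,q)}(E_1,...,E_m;F) as an extended real (inf of empty set = +oo). *)
Definition eta_mult (R : realType) (K : numFieldType) (re : K -> R)
    (m : nat) (E : 'I_m -> normedModType K) (F : normedModType K)
    (p q : R) : \bar R :=
  ereal_inf [set s%:E | s in summing_exponent re E F p q].

From HB Require Import structures.
From mathcomp Require Import all_boot all_order all_algebra.
From mathcomp Require Import all_classical all_reals all_analysis.
From mathcomp Require Import complex.
From mathcomp Require Import ring lra.
Import numFieldNormedType.Exports.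
Import Order.TTheory GRing.Theory Num.Theory.
Set Implicit Arguments. Unset Strict Implicit. Unset Printing Implicit Defensive.
Local Open Scope ring_scope.

(* Both bounds already hold with the trivial exponent m/p, which is at most
   (qp - 2p + 2q)m/(2qp) when q >= 2.  Indeed each of the n^m terms
   |T(x_{k_1},...,x_{k_m})| is at most C prod_i |x_{k_i}|, and every
   |x_k| <= ||(x_k)_k||_{w,q} because the dual unit ball is norming.

   The norming property is Hahn-Banach, proved by Zorn's lemma: a sublinear
   q that is minimal below p is linear, because for every z the functional
   x |-> inf_{t >= 0} q(x + t z) - t q(z) is again sublinear, lies below q
   and sends -z to at most -q(z).  Over C one complexifies a real-linear f
   as x |-> f(x) - i f(ix). *)

Section HahnBanach.
Local Open Scope classical_set_scope.
Variables (R : realType) (V : lmodType R).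

Lemma inf_image_le (X : Type) (A : set X) (F : X -> R) (b : R) a :
  (forall a, A a -> b <= F a) -> A a -> inf (F @` A) <= F a.
Proof.
move=> Fb Aa; apply: ge_inf; last by exists a.
by exists b => _ [c Ac <-]; exact: Fb.
Qed.

Lemma le_inf_image (X : Type) (A : set X) (F : X -> R) (b : R) :
  A !=set0 -> (forall a, A a -> b <= F a) -> b <= inf (F @` A).
Proof.
move=> [a Aa] Fb; apply: lb_le_inf; first by exists (F a), a.
by move=> _ [c Ac <-]; exact: Fb.
Qed.

Definition sublinear (p : V -> R) :=
  (forall x y, p (x + y) <= p x + p y) /\ (forall a x, 0 <= a -> p (a *: x) = a * p x).

Lemma sublinear0 p : sublinear p -> p 0 = 0.
Proof. by move=> [_ pZ]; rewrite -(scale0r 0) pZ // mul0r. Qed.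

Lemma sublinear_ge_opp p x : sublinear p -> - p (- x) <= p x.
Proof. by move=> sp; have := sp.1 x (- x); rewrite subrr sublinear0 //; lra. Qed.

Definition linear_functional (f : V -> R) :=
  forall a x y, f (a *: x + y) = a * f x + f y.

Section LinearFunctional.
Variable f : V -> R.
Hypothesis f_lin : linear_functional f.

Lemma linear_functional0 : f 0 = 0.
Proof. by have := f_lin 1 0 0; rewrite scale1r addr0 mul1r; lra. Qed.

Lemma linear_functionalD x y : f (x + y) = f x + f y.
Proof. by have := f_lin 1 x y; rewrite scale1r mul1r. Qed.

Lemma linear_functionalZ a x : f (a *: x) = a * f x.
Proof. by rewrite -[_ *: _]addr0 f_lin linear_functional0 addr0. Qed.

Lemma linear_functionalN x : f (- x) = - f x.
Proof. by rewrite -scaleN1r linear_functionalZ mulN1r. Qed.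

End LinearFunctional.

Definition shift (p : V -> R) (z x : V) : R :=
  inf [set p (x + t *: z) - t * p z | t in [set t : R | 0 <= t]].

Section Shift.
Variables (p : V -> R) (z : V).
Hypothesis sp : sublinear p.

Lemma shift_le x t : 0 <= t -> shift p z x <= p (x + t *: z) - t * p z.
Proof.
move=> t0; apply: (@inf_image_le _ _ _ (- p (- x))) => // s s0.
have := sp.1 (x + s *: z) (- x); rewrite addrC addKr sp.2 //; lra.
Qed.

Lemma shift_ge x b :
  (forall t, 0 <= t -> b <= p (x + t *: z) - t * p z) -> b <= shift p z x.
Proof. by move=> pb; apply: le_inf_image => //; exists 0 => /=. Qed.

Lemma shift_le_self x : shift p z x <= p x.
Proof. by have := shift_le x (lexx 0); rewrite scale0r addr0 mul0r subr0. Qed.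

Lemma shift_opp : shift p z (- z) <= - p z.
Proof.
by have := shift_le (- z) ler01; rewrite scale1r addNr sublinear0 // mul1r sub0r.
Qed.

Lemma shiftD x y : shift p z (x + y) <= shift p z x + shift p z y.
Proof.
have split_t s t : 0 <= s -> 0 <= t -> shift p z (x + y) <=
    (p (x + s *: z) - s * p z) + (p (y + t *: z) - t * p z).
  move=> s0 t0; apply: le_trans (shift_le (x + y) (addr_ge0 s0 t0)) _.
  have := sp.1 (x + s *: z) (y + t *: z).
  by rewrite addrACA -scalerDl; lra.
suff : shift p z (x + y) - shift p z y <= shift p z x by lra.
apply: shift_ge => s s0.
suff : shift p z (x + y) - (p (x + s *: z) - s * p z) <= shift p z y by lra.
by apply: shift_ge => t t0; have := split_t s t s0 t0; lra.
Qed.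

Lemma shiftZ a x : 0 <= a -> shift p z (a *: x) = a * shift p z x.
Proof.
rewrite le_eqVlt => /predU1P[<-|a_gt0].
  rewrite scale0r mul0r; apply: le_anti; apply/andP; split.
    by have := shift_le_self 0; rewrite (sublinear0 sp).
  by apply: shift_ge => t t0; rewrite add0r sp.2 // subrr.
apply: le_anti; apply/andP; split.
  rewrite -ler_pdivrMl //; apply: shift_ge => t t0; rewrite ler_pdivrMl //.
  have := shift_le (a *: x) (mulr_ge0 (ltW a_gt0) t0).
  by rewrite -scalerA -scalerDr sp.2 ?(ltW a_gt0) // mulrBr mulrA.
apply: shift_ge => t t0.
have -> : a *: x + t *: z = a *: (x + (t / a) *: z).
  by rewrite scalerDr scalerA mulrCA divff ?gt_eqF // mulr1.
rewrite sp.2 ?(ltW a_gt0) // (_ : t * p z = a * (t / a * p z)).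
  by rewrite -mulrBr ler_pM2l // shift_le // divr_ge0 // ltW.
by rewrite mulrA mulrCA divff ?gt_eqF // mulr1.
Qed.

Lemma sublinear_shift : sublinear (shift p z).
Proof. by split; [exact: shiftD | exact: shiftZ]. Qed.

End Shift.

Lemma minimal_sublinear_linear q : sublinear q -> (forall z x, q x <= shift q z x) ->
  linear_functional q.
Proof.
move=> sq qmin.
have qN z : q (- z) = - q z.
  have := le_trans (qmin z (- z)) (shift_opp z sq).
  by have := sublinear_ge_opp (- z) sq; rewrite opprK; lra.
have qD x y : q (x + y) = q x + q y.
  have := sq.1 x y; have := sq.1 (- x) (- y).
  by rewrite -opprD !qN; lra.
move=> a x y; rewrite qD; congr (_ + _).
have [a0|a0] := lerP 0 a; first exact: sq.2.
have -> : a *: x = - ((- a) *: x) by rewrite scaleNr opprK.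
by rewrite qN sq.2 ?oppr_ge0 ?ltW // mulNr opprK.
Qed.

Section MinimalSublinear.
Variable P : V -> R.
Hypothesis sP : sublinear P.

Definition dominated_sublinear q := sublinear q /\ forall x, q x <= P x.

Lemma dominated_sublinear_ge_opp q x : dominated_sublinear q -> - P (- x) <= q x.
Proof. by move=> [sq qP]; have := qP (- x); have := sublinear_ge_opp x sq; lra. Qed.

Section ChainInf.
Variable A : set (V -> R).
Hypotheses (A0 : A !=set0) (A_dom : A `<=` dominated_sublinear).
Hypothesis A_chain : forall q1 q2, A q1 -> A q2 ->
  (forall x, q1 x <= q2 x) \/ (forall x, q2 x <= q1 x).

Definition chain_inf x := inf [set q x | q in A].

Lemma chain_inf_le q x : A q -> chain_inf x <= q x.
Proof.
by apply: (@inf_image_le _ _ _ (- P (- x))) => r Ar; exact/dominated_sublinear_ge_opp/A_dom.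
Qed.

Lemma chain_inf_ge x b : (forall q, A q -> b <= q x) -> b <= chain_inf x.
Proof. exact: le_inf_image. Qed.

Lemma chain_infD x y : chain_inf (x + y) <= chain_inf x + chain_inf y.
Proof.
have two_members q1 q2 : A q1 -> A q2 -> chain_inf (x + y) <= q1 x + q2 y.
  move=> Aq1 Aq2; have [[sq1 _] [sq2 _]] := (A_dom Aq1, A_dom Aq2).
  have [q12|q21] := A_chain Aq1 Aq2.
    apply: le_trans (chain_inf_le _ Aq1) _.
    by apply: le_trans (sq1.1 x y) _; rewrite lerD2l.
  apply: le_trans (chain_inf_le _ Aq2) _.
  by apply: le_trans (sq2.1 x y) _; rewrite lerD2r.
suff : chain_inf (x + y) - chain_inf y <= chain_inf x by lra.
apply: chain_inf_ge => q1 Aq1.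
suff : chain_inf (x + y) - q1 x <= chain_inf y by lra.
by apply: chain_inf_ge => q2 Aq2; have := two_members _ _ Aq1 Aq2; lra.
Qed.

Lemma chain_infZ a x : 0 <= a -> chain_inf (a *: x) = a * chain_inf x.
Proof.
move=> a0; have [q0 Aq0] := A0.
have qZ q : A q -> q (a *: x) = a * q x by move=> /A_dom[[_ qZ] _]; exact: qZ.
move: a0 qZ; rewrite le_eqVlt => /predU1P[<- qZ|a_gt0 qZ].
  rewrite mul0r; apply: le_anti; apply/andP; split.
    by apply: le_trans (chain_inf_le _ Aq0) _; rewrite qZ // mul0r.
  by apply: chain_inf_ge => q Aq; rewrite qZ // mul0r.
apply: le_anti; apply/andP; split.
  rewrite -ler_pdivrMl //; apply: chain_inf_ge => q Aq.
  by rewrite ler_pdivrMl // -qZ //; exact: chain_inf_le.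
apply: chain_inf_ge => q Aq; rewrite qZ // ler_pM2l //; exact: chain_inf_le.
Qed.

Lemma dominated_chain_inf : dominated_sublinear chain_inf.
Proof.
split; first by split; [exact: chain_infD | exact: chain_infZ].
move=> x; have [q0 Aq0] := A0; have [_ q0P] := A_dom Aq0.
exact: le_trans (chain_inf_le _ Aq0) (q0P x).
Qed.

End ChainInf.

Lemma exists_minimal_sublinear :
  exists q, dominated_sublinear q /\ forall z x, q x <= shift q z x.
Proof.
pose T := {q : V -> R | dominated_sublinear q}.
pose ge_fun : rel T := fun q1 q2 => `[< forall x, sval q2 x <= sval q1 x >].
have ge_refl t : ge_fun t t by apply/asboolP => x.
have ge_trans r s t : ge_fun r s -> ge_fun s t -> ge_fun r t.
  by move=> /asboolP rs /asboolP st; apply/asboolP => x; exact: le_trans (st x) (rs x).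
have chain_lb (A : set T) : total_on A ge_fun -> exists t, forall s, A s -> ge_fun s t.
  move=> Atot; have [[s0 As0]|A0] := pselect (A !=set0); last first.
    exists (exist _ P (conj sP (fun x => lexx _))) => s As.
    by exfalso; apply: A0; exists s.
  have Adom : sval @` A `<=` dominated_sublinear by move=> _ [[q ?] _ <-].
  have Achain q1 q2 : (sval @` A) q1 -> (sval @` A) q2 ->
      (forall x, q1 x <= q2 x) \/ (forall x, q2 x <= q1 x).
    move=> [t1 At1 <-] [t2 At2 <-].
    by have [/asboolP|/asboolP] := Atot _ _ At1 At2; [right|left].
  exists (exist _ _ (dominated_chain_inf (image_nonempty _ (ex_intro _ s0 As0)) Adom Achain)).
  by move=> s As; apply/asboolP => x /=; apply: chain_inf_le => //; exists s.
have [[q domq] qmax] := ZL_preorder (exist _ P (conj sP (fun x => lexx _)))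
  ge_refl ge_trans chain_lb.
exists q; split => // z x.
have dom_shift : dominated_sublinear (shift q z).
  split; first exact: sublinear_shift domq.1.
  by move=> y; exact: le_trans (shift_le_self z domq.1 y) (domq.2 y).
have /asboolP := qmax (exist _ _ dom_shift) (asboolT (shift_le_self z domq.1)).
by apply.
Qed.

End MinimalSublinear.

Theorem Hahn_Banach (P : V -> R) (x0 : V) : sublinear P ->
  exists f : V -> R, [/\ linear_functional f, forall x, f x <= P x & f x0 = P x0].
Proof.
(* Dominating by the shift of P along x0 forces f (- x0) <= - P x0. *)
move=> sP; have [f [[sf fP] fmin]] := exists_minimal_sublinear (sublinear_shift x0 sP).
have f_lin := minimal_sublinear_linear sf fmin.
have fP' x : f x <= P x := le_trans (fP x) (shift_le_self x0 sP x).
exists f; split => //; apply: le_anti; rewrite fP' /=.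
have := le_trans (fP (- x0)) (shift_opp x0 sP).
by rewrite (linear_functionalN f_lin); lra.
Qed.

End HahnBanach.

Definition dual_norming (K : numFieldType) (E : normedModType K) :=
  forall x : E, exists2 phi, dual_ball phi & `|phi x| = `|x|.

Lemma dual_norming_real (R : realType) (E : normedModType R) : dual_norming E.
Proof.
move=> x0.
have sp : sublinear (fun x : E => `|x|).
  by split=> [x y|a x a0]; [exact: ler_normD | rewrite normrZ ger0_norm].
have [f [f_lin fle fx0]] := Hahn_Banach x0 sp.
have phi_ball : dual_ball f.
  split=> [|x]; first exact: f_lin.
  by rewrite ler_norml fle andbT lerNl -(linear_functionalN f_lin) -(normrN x) fle.
by exists f => //; rewrite fx0 ger0_norm.
Qed.

Definition realify (R : rcfType) (E : lmodType R[i]) : Type := E.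
HB.instance Definition _ (R : rcfType) (E : lmodType R[i]) :=
  GRing.Zmodule.on (@realify R E).

Section Realify.
Local Open Scope complex_scope.
Variables (R : rcfType) (E : lmodType R[i]).

Definition realify_scale (r : R) (x : realify E) : realify E := (r%:C *: (x : E) : E).

Lemma realify_scaleA a b v :
  realify_scale a (realify_scale b v) = realify_scale (a * b) v.
Proof. by rewrite /realify_scale scalerA rmorphM. Qed.

Lemma realify_scale1 : left_id 1 realify_scale.
Proof. by move=> v; rewrite /realify_scale rmorph1 scale1r. Qed.

Lemma realify_scaleDr : right_distributive realify_scale +%R.
Proof. by move=> a u v; rewrite /realify_scale scalerDr. Qed.

Lemma realify_scaleDl v : {morph realify_scale^~ v : a b / a + b}.
Proof. by move=> a b; rewrite /realify_scale rmorphD scalerDl. Qed.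

HB.instance Definition _ := GRing.Zmodule_isLmodule.Build R (realify E)
  realify_scaleA realify_scale1 realify_scaleDr realify_scaleDl.

End Realify.

Section ComplexNorming.
Local Open Scope complex_scope.
Variable R : realType.

Lemma RRe_ge0 (z : R[i]) : 0 <= z -> (complex.Re z)%:C = z.
Proof. by move=> z0; rewrite RRe_real // ger0_real. Qed.

Lemma Re_homo : {homo @complex.Re R : a b / a <= b}.
Proof. by move=> a b; rewrite lecE => /andP[]. Qed.

Lemma Re_nneg_mul : {in Num.nneg &, {morph @complex.Re R : a b / a * b}}.
Proof. by move=> a b a0 b0; rewrite -(RRe_ge0 a0) -(RRe_ge0 b0) -rmorphM. Qed.

Section Complexify.
Variables (E : normedModType R[i]) (f : E -> R).
Hypothesis fD : {morph f : x y / x + y}.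
Hypothesis fZ : forall (r : R) x, f (r%:C *: x) = r * f x.

Definition complexify x := (f x)%:C - 'i * (f ('i *: x))%:C.

Lemma Re_complexify x : complex.Re (complexify x) = f x.
Proof. by rewrite /complexify; simpc. Qed.

Lemma fZ_complex a x :
  f (a *: x) = complex.Re a * f x + complex.Im a * f ('i *: x).
Proof.
have -> : a *: x = (complex.Re a)%:C *: x + (complex.Im a)%:C *: ('i *: x).
  by rewrite scalerA -scalerDl; congr (_ *: _); case: a => u v; simpc.
by rewrite fD !fZ.
Qed.

Lemma complexifyD x y : complexify (x + y) = complexify x + complexify y.
Proof. by rewrite /complexify scalerDr !fD; simpc; congr (_ +i* _); ring. Qed.

Lemma complexifyZ a x : complexify (a *: x) = a * complexify x.
Proof.
have fN z : f (- z) = - f z by rewrite -scaleN1r -(rmorphN1 (real_complex R)) fZ mulN1r.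
have fiZ : f ('i *: (a *: x)) = complex.Re a * f ('i *: x) - complex.Im a * f x.
  rewrite scalerA mulrC -scalerA fZ_complex scalerA.
  by rewrite (_ : 'i * 'i = -1) ?scaleN1r ?fN ?mulrN //; simpc.
rewrite /complexify fZ_complex fiZ; clear fiZ.
by case: a => u v /=; simpc; congr (_ +i* _); ring.
Qed.

Lemma norm_complexify_le :
  (forall x, f x <= complex.Re `|x|) -> forall x, `|complexify x| <= `|x|.
Proof.
move=> fle x; set w := complexify x.
have [->|w_neq0] := eqVneq w 0; first by rewrite normr0.
have phase : complexify ((`|w| / w) *: x) = `|w|.
  by rewrite complexifyZ -/w divfK.
have norm_phase : `| `|w| / w| = 1 by rewrite normrM normfV normr_id divff // normr_eq0.
rewrite -(RRe_ge0 (normr_ge0 w)) -(RRe_ge0 (normr_ge0 x)) lecR -phase Re_complexify.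
by have := fle ((`|w| / w) *: x); rewrite normrZ norm_phase mul1r.
Qed.

End Complexify.

Lemma dual_norming_complex (E : normedModType R[i]) : dual_norming E.
Proof.
move=> x0.
have sp : sublinear (fun x : realify E => complex.Re `|x : E|).
  split=> [x y|a x a0].
    rewrite -(raddfD (@complex.Re R : Rcomplex R -> R)).
    by apply: Re_homo; exact: ler_normD.
  rewrite /GRing.scale /= /realify_scale normrZ ger0_norm ?ler0c //.
  by rewrite Re_nneg_mul ?nnegrE ?ler0c.
have [f [f_lin fle fx0]] := Hahn_Banach (x0 : realify E) sp.
have fD (x y : E) : f (x + y) = f x + f y := linear_functionalD f_lin x y.
have fZ (r : R) (x : E) : f (r%:C *: x) = r * f x := linear_functionalZ f_lin r x.
exists (complexify f).
  split=> [a x y|x]; first by rewrite complexifyD // complexifyZ.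
  exact: norm_complexify_le.
apply: le_anti; rewrite norm_complexify_le //=.
rewrite -(RRe_ge0 (normr_ge0 x0)) -fx0 -(Re_complexify f x0).
apply: le_trans (normc_ge_Re _); rewrite lecR; exact: ler_norm.
Qed.

End ComplexNorming.

Lemma powRK (R : realType) (r x : R) : r != 0 -> 0 <= x -> (x `^ r) `^ r^-1 = x.
Proof. by move=> r0 x0; rewrite -powRrM divff // powRr1. Qed.

Section TrivialExponent.
Local Open Scope classical_set_scope.
Variables (R : realType) (K : numFieldType) (re : K -> R).
Hypothesis re_homo : {homo re : a b / a <= b}.
Hypothesis re_nneg_mul : {in Num.nneg &, {morph re : a b / a * b}}.
Hypotheses (re0 : re 0 = 0) (re1 : re 1 = 1).

Lemma re_ge0 a : 0 <= a -> 0 <= re a.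
Proof. by move=> /re_homo; rewrite re0. Qed.

Lemma re_prod (I : finType) (G : I -> K) : (forall i, 0 <= G i) ->
  re (\prod_i G i) = \prod_i re (G i).
Proof.
move=> G0; suff [] : 0 <= \prod_i G i /\ re (\prod_i G i) = \prod_i re (G i) by [].
apply: (big_ind2 (fun a b => 0 <= a /\ re a = b)) => //.
by move=> a1 b1 a2 b2 [a10 <-] [a20 <-]; split; [exact: mulr_ge0 | exact: re_nneg_mul].
Qed.

Lemma norm_le_weak_norm (E : normedModType K) (q : R) (n : nat) (x : 'I_n -> E) j :
  dual_norming E -> 0 < q -> re `|x j| <= weak_norm re q x.
Proof.
move=> normE q_gt0; have [phi phi_ball phi_xj] := normE (x j).
have qV_ge0 : 0 <= q^-1 by rewrite invr_ge0 ltW.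
have sum_ge0 (g : 'I_n -> R) : 0 <= \sum_(k < n) g k `^ q.
  by apply: sumr_ge0 => k _; exact: powR_ge0.
apply: (@le_trans _ _ ((\sum_(k < n) (re `|phi (x k)|) `^ q) `^ q^-1)).
  rewrite -phi_xj -[leLHS](powRK (lt0r_neq0 q_gt0) (re_ge0 (normr_ge0 _))).
  apply: ge0_ler_powR; rewrite ?nnegrE ?powR_ge0 //.
  by rewrite (bigD1 j) //= lerDl sumr_ge0 // => k _; exact: powR_ge0.
apply: ub_le_sup; last by exists phi.
exists ((\sum_(k < n) (re `|x k|) `^ q) `^ q^-1) => _ [psi [_ psi_le] <-].
apply: ge0_ler_powR; rewrite ?nnegrE //.
apply: ler_sum => k _; apply: ge0_ler_powR; rewrite ?nnegrE ?re_ge0 //.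
  exact: ltW.
exact: re_homo.
Qed.

Lemma summing_exponent_trivial (m : nat) (E : 'I_m -> normedModType K)
    (F : normedModType K) (p q : R) :
  0 < p -> 0 < q -> (forall i, dual_norming (E i)) ->
  summing_exponent re E F p q (m%:R / p).
Proof.
move=> p_gt0 q_gt0 normE T [_ [C0 T_bound]].
have C_ge0 : 0 <= re `|C0| by exact/re_ge0.
exists (re `|C0|); split => // n x n_gt0.
set w := fun i => weak_norm re q (x i).
have x_le_w i j : re `|x i j| <= w i by exact: norm_le_weak_norm.
have w_ge0 i : 0 <= w i by apply: le_trans (x_le_w i (Ordinal n_gt0)); exact: re_ge0.
set B := re `|C0| * \prod_i w i.
have B_ge0 : 0 <= B by rewrite mulr_ge0 ?prodr_ge0.
have T_le_B (k : {ffun 'I_m -> 'I_n}) : re `|T (fun i => x i (k i))| <= B.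
  set y := fun i => x i (k i).
  have y_ge0 : 0 <= \prod_i `|y i| by exact: prodr_ge0.
  have : `|T y| <= `|C0| * \prod_i `|y i|.
    have Ty_le := T_bound y.
    rewrite -[X in _ * X]ger0_norm // -normrM ger0_norm //.
    exact: le_trans (normr_ge0 _) Ty_le.
  move/re_homo/le_trans; apply.
  rewrite re_nneg_mul ?nnegrE // re_prod // ler_wpM2l //.
  by apply: ler_prod => i _; rewrite re_ge0 //=; exact: x_le_w.
have p_ge0 : 0 <= p by exact: ltW.
have sum_le : \sum_(k : {ffun 'I_m -> 'I_n}) (re `|T (fun i => x i (k i))|) `^ p
    <= (n ^ m)%:R * B `^ p.
  apply: le_trans (_ : \sum_(k : {ffun 'I_m -> 'I_n}) B `^ p <= _).
    by apply: ler_sum => k _; apply: ge0_ler_powR; rewrite ?nnegrE ?re_ge0.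
  by rewrite sumr_const card_ffun !card_ord mulr_natl.
apply: le_trans (ge0_ler_powR _ _ _ sum_le) _; rewrite ?nnegrE ?invr_ge0 //.
- by apply: sumr_ge0 => k _; exact: powR_ge0.
- by rewrite mulr_ge0 ?powR_ge0.
rewrite powRM ?powR_ge0 // powRK ?lt0r_neq0 //.
by rewrite natrX -powR_mulrn // -powRrM mulrCA mulrA.
Qed.

Lemma eta_mult_le_trivial (m : nat) (E : 'I_m -> normedModType K)
    (F : normedModType K) (p q : R) :
  0 < p -> 0 < q -> (forall i, dual_norming (E i)) ->
  (eta_mult re E F p q <= (m%:R / p)%:E)%E.
Proof.
by move=> p_gt0 q_gt0 normE; apply: ereal_inf_lbound; exists (m%:R / p);
  first exact: summing_exponent_trivial.
Qed.

End TrivialExponent.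

Lemma trivial_exponent_le (R : realType) (p q : R) (m : nat) : 0 < p -> 2 <= q ->
  m%:R / p <= (q * p - 2 * p + 2 * q) * m%:R / (2 * q * p).
Proof.
move=> p_gt0 q_ge2; have q_gt0 : 0 < q by apply: lt_le_trans q_ge2.
have -> : (q * p - 2 * p + 2 * q) * m%:R / (2 * q * p) =
    m%:R / p + m%:R * (q - 2) / (2 * q).
  by field; rewrite !lt0r_neq0.
by rewrite lerDl divr_ge0 ?mulr_ge0 ?subr_ge0 // ltW.
Qed.

Theorem mainTheorem5 (R : realType) (p q : R) (m : nat) :
  0 < p -> p < q ->
  (forall (E : 'I_m -> completeNormedModType R) (F : completeNormedModType R),
      (q <= 2 -> (eta_mult (fun r : R => r) E F p q <= (m%:R / p)%:E)%E) /\
      (2 <= q -> (eta_mult (fun r : R => r) E F p q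
                   <= ((q * p - 2 * p + 2 * q) * m%:R / (2 * q * p))%:E)%E)) /\
  (forall (E : 'I_m -> completeNormedModType R[i]) (F : completeNormedModType R[i]),
      (q <= 2 -> (eta_mult (fun z : R[i] => complex.Re z) E F p q <= (m%:R / p)%:E)%E) /\
      (2 <= q -> (eta_mult (fun z : R[i] => complex.Re z) E F p q
                   <= ((q * p - 2 * p + 2 * q) * m%:R / (2 * q * p))%:E)%E)).
Proof.
move=> p_gt0 /(lt_trans p_gt0) q_gt0.
have both_bounds (e : \bar R) : (e <= (m%:R / p)%:E)%E ->
    (q <= 2 -> (e <= (m%:R / p)%:E)%E) /\
    (2 <= q -> (e <= ((q * p - 2 * p + 2 * q) * m%:R / (2 * q * p))%:E)%E).
  move=> e_le; split=> // q_ge2; apply: le_trans e_le _.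
  by rewrite lee_fin trivial_exponent_le.
split=> E F; apply: both_bounds.
  by apply: eta_mult_le_trivial => // i; exact: dual_norming_real.
apply: (eta_mult_le_trivial (@Re_homo R) (@Re_nneg_mul R)) => // i.
exact: dual_norming_complex.
Qed.
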